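(* Let $\lambda\neq 0$ be real, let $r\ge 1$ and $a_1,\dots,a_r\ge 1$ be integers, and let $G$ be the threshold graph with block sequence $0^{a_1}1^{a_2}0^{a_3}\cdots b_r^{a_r}$ and bags $B_1,\dots,B_r$. Let $\epsilon_{i,j}$ ($1\le i<j\le r$, $j$ even) be arbitrary nonzero reals, and define for $1\le i\le r$: $p_i=0,\ \epsilon_i=0$ if $i\equiv 1\pmod 4$; $p_i=\frac{\lambda(a_i-1)}{a_i},\ \epsilon_i=-\frac{\lambda}{a_i}$ if $i\equiv 2\pmod 4$; $p_i=\lambda,\ \epsilon_i=0$ if $i\equiv 3\pmod 4$; $p_i=\frac{\lambda}{a_i},\ \epsilon_i=\frac{\lambda}{a_i}$ if $i\equiv 0\pmod 4$. Let $M$ be the uniform weighted matrix of $G$ with these parameters. Let $T_1$ be the single-vertex-bag weighted threshold matrix on $v_1,\dots,v_r$ with vertex weights $p^{(1)}_i=0$ if $i\equiv 1,2\pmod 4$ and $p^{(1)}_i=\lambda$ if $i\equiv 0,3\pmod 4$, and edge weights $\epsilon^{(1)}_{i,j}=\epsilon_{i,j}\sqrt{a_ia_j}$ ($i<j$, $j$ even). Then, as multisets, $$\mathrm{Spec}(M)=\mathrm{Spec}(T_1)\cup\{0^{[A]},\lambda^{[B]}\},$$ where $A=\sum_{1\le i\le r,\ i\equiv 0,1 \ (\mathrm{mod}\ 4)}(a_i-1)$ and $B=\sum_{1\le i\le r,\ i\equiv 2,3\ (\mathrm{mod}\ 4)}(a_i-1)$, and $x^{[m]}$ denotes $m$ copies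 of $x$.
   Context: Threshold graph with block sequence $0^{a_1}1^{a_2}0^{a_3}1^{a_4}\cdots b_r^{a_r}$ ($a_i\ge 1$, $b_i=0$ for $i$ odd and $b_i=1$ for $i$ even): its vertex set is partitioned into bags $B_1,\dots,B_r$ with $|B_i|=a_i$ (added in this order, the vertices of $B_i$ being added as isolated vertices if $i$ is odd and as dominating vertices if $i$ is even); two distinct vertices $u\in B_i$, $v\in B_j$ with $i\le j$ are adjacent if and only if $j$ is even. Uniform weighted matrix: given reals $p_i$, $\epsilon_i$ ($\epsilon_i\ne0$ when $i$ is even) and nonzero reals $\epsilon_{i,j}$ ($i<j$, $j$ even), it is the symmetric matrix $M$ indexed by the vertices with $M_{vv}=p_i$ for $v\in B_i$; $M_{uv}=\epsilon_i$ for distinct $u,v\in B_i$ with $i$ even; $M_{uv}=\epsilon_{i,j}$ for $u\in B_i$, $v\in B_j$, $i<j$, $j$ even; and all other entries $0$. A single-vertex-bag weighted threshold matrix on $v_k,\dots,v_r$ (the case $a_i=1$ for all $i$, with indices starting at $k$) is the symmetric matrix indexed by $v_k,\dots,v_r$ with diagonal entries $p_i$ and, for $i<j$, entry $\epsilon_{i,j}\ne 0$ at $(v_i,v_j)$ if $j$ is even and $0$ if $j$ is odd. $\mathrm{Spec}$ denotes the multiset of eigenvalues, and $\cup$ of multisets adds multiplicities. *)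

From HB Require Import structures.
From mathcomp Require Import all_boot all_order all_algebra.
Set Implicit Arguments. Unset Strict Implicit. Unset Printing Implicit Defensive.
Import Order.TTheory GRing.Theory Num.Theory.
Local Open Scope ring_scope.

(* Conventions: bags/indices are 'I_r with 0-based index k, corresponding to
   the paper's index i = k.+1.  "paper index even" = ~~ odd k.+1. *)

Definition peven (r : nat) (k : 'I_r) : bool := ~~ odd k.+1.

Definition bagV (r : nat) (a : 'I_r -> nat) : finType := {k : 'I_r & 'I_(a k)}.

Definition uwm_entry (R : ringType) (r : nat) (a : 'I_r -> nat)
  (p e1 : 'I_r -> R) (e2 : 'I_r -> 'I_r -> R) (u v : bagV a) : R :=
  let i := tag u in let j := tag v in
  if u == v then p i
  else if i == j then (if peven i then e1 i else 0)
  else if (i < j)%N then (if peven j then e2 i j else 0)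
  else (if peven i then e2 j i else 0).

Definition uniform_weighted_matrix (R : ringType) (r : nat) (a : 'I_r -> nat)
  (p e1 : 'I_r -> R) (e2 : 'I_r -> 'I_r -> R) : 'M[R]_#|bagV a| :=
  \matrix_(s, t) uwm_entry p e1 e2 (enum_val s) (enum_val t).

Definition sv_threshold_matrix (R : ringType) (r : nat)
  (p : 'I_r -> R) (e : 'I_r -> 'I_r -> R) : 'M[R]_r :=
  \matrix_(i, j)
    if i == j then p i
    else if (i < j)%N then (if peven j then e i j else 0)
    else (if peven i then e j i else 0).

(* Multiset of eigenvalues: multiplicity of x in Spec(A) = multiplicity of x
   as a root of the characteristic polynomial. *)
Definition spec_mult (R : fieldType) (n : nat) (A : 'M[R]_n) (x : R) : nat :=
  mup x (char_poly A).

Definition m4 (r : nat) (k : 'I_r) : nat := (k.+1 %% 4)%N.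

Arguments uniform_weighted_matrix {R r} a p e1 e2.

From HB Require Import structures.
From mathcomp Require Import all_boot all_order all_algebra.
From mathcomp Require Import fingroup perm ring.
Import Order.TTheory GRing.Theory Num.Theory.
Set Implicit Arguments. Unset Strict Implicit. Unset Printing Implicit Defensive.
Local Open Scope ring_scope.

(* Two vertices of the same bag are twins, so for a non-representative vertex v of
   bag k the vector e_v - e_rep(k) is an eigenvector of M with eigenvalue
   p_k - eps_k (eps_k = 0 for odd k).  In the basis made of these vectors and of
   the representatives, M is block lower triangular; its r x r block is the
   quotient matrix (a_j c_jk), which conjugation by diag(sqrt a_k) turns into the
   symmetric matrix with entries c_jk sqrt(a_j a_k).  For the weights of the
   theorem this is T1, and the twin eigenvalues p_k - eps_k are 0 for
   k = 0, 1 (mod 4) and lambda for k = 2, 3 (mod 4). *)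

Section CharPolySimilar.
Variable R : comNzRingType.

Lemma char_poly_conj n (A P P' : 'M[R]_n) :
  P' *m P = 1%:M -> char_poly (P' *m A *m P) = char_poly A.
Proof.
move=> PP; have cpE : char_poly_mx (P' *m A *m P) =
    map_mx polyC P' *m char_poly_mx A *m map_mx polyC P.
  rewrite /char_poly_mx mulmxBr mulmxBl -!map_mxM mul_mx_scalar -scalemxAl.
  by rewrite -map_mxM PP map_mx1 scalemx1.
by rewrite /char_poly cpE !det_mulmx mulrAC -det_mulmx -map_mxM PP map_mx1 det1 mul1r.
Qed.

Lemma char_poly_similar n (A B P P' : 'M[R]_n) :
  P' *m P = 1%:M -> A *m P = P *m B -> char_poly B = char_poly A.
Proof.
by move=> PP AP; rewrite -(char_poly_conj A PP) -mulmxA AP mulmxA PP mul1mx.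
Qed.

Lemma char_poly_perm n (A : 'M[R]_n) (s : 'S_n) :
  char_poly (\matrix_(i, j) A (s i) (s j)) = char_poly A.
Proof.
have -> : \matrix_(i, j) A (s i) (s j) = perm_mx s *m A *m perm_mx s^-1.
  by rewrite -row_permE -col_permE; apply/matrixP => i j; rewrite !mxE.
by rewrite char_poly_conj // -perm_mxM mulgV perm_mx1.
Qed.

Lemma char_poly_reindex (T : finType) (F : T -> T -> R) n1 n2
    (f : 'I_n1 -> T) (g : 'I_n2 -> T) : bijective f -> bijective g ->
  char_poly (\matrix_(i, j) F (f i) (f j)) = char_poly (\matrix_(i, j) F (g i) (g j)).
Proof.
move=> bij_f bij_g; have n12 : n1 = n2.
  by rewrite -(card_ord n1) -(card_ord n2) (bij_eq_card bij_f) (bij_eq_card bij_g).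
subst n2; case: bij_g => g' gK g'K.
have inj_g'f : injective (g' \o f) by move=> i j /= /(can_inj g'K); apply: bij_inj.
rewrite -(char_poly_perm (\matrix_(i, j) F (g i) (g j)) (perm inj_g'f)).
congr char_poly.
by apply/matrixP => i j; rewrite !mxE !permE /= !g'K.
Qed.

Lemma char_poly_block_lower n1 n2 (A : 'M[R]_n1) (C : 'M_(n2, n1)) (B : 'M_n2) :
  char_poly (block_mx A 0 C B) = char_poly A * char_poly B.
Proof.
rewrite /char_poly /char_poly_mx map_block_mx (scalar_mx_block n1 n2).
by rewrite opp_block_mx add_block_mx map_mx0 oppr0 addr0 det_lblock.
Qed.

End CharPolySimilar.

Lemma char_poly_diag_scale (F : fieldType) n (A : 'M[F]_n) (w : 'I_n -> F) :
  (forall k, w k != 0) -> char_poly (\matrix_(j, k) (w j * A j k / w k)) = char_poly A.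
Proof.
move=> w_neq0; pose D := diag_mx (\row_k w k); pose D' := diag_mx (\row_k (w k)^-1).
have DD' : D *m D' = 1%:M.
  apply/matrixP => i j; rewrite mul_diag_mx !mxE.
  by case: (eqVneq i j) => [->|]; rewrite ?mulr1n ?mulr0n ?mulr0 ?mulfV.
rewrite -(char_poly_conj A DD'); congr char_poly.
by apply/matrixP => j k; rewrite mul_mx_diag mul_diag_mx !mxE.
Qed.

Lemma mup_prod_XsubC_exp (F : fieldType) n (d : 'I_n -> F) (m : 'I_n -> nat) x :
  mup x (\prod_k ('X - (d k)%:P) ^+ m k) = (\sum_k (d k == x) * m k)%N.
Proof.
suff [] : \prod_k ('X - (d k)%:P) ^+ m k \is monic /\
    mup x (\prod_k ('X - (d k)%:P) ^+ m k) = (\sum_k (d k == x) * m k)%N by [].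
apply: (big_rec2 (fun (s : nat) (q : {poly F}) => q \is monic /\ mup x q = s)).
  by rewrite monic1 mupNroot // root1.
move=> k s q _ [q_monic <-]; have Xk_monic := monic_exp (m k) (monicXsubC (d k)).
rewrite monicMl // q_monic mupM ?monic_neq0 // mup_XsubCX.
by case: (d k == x); rewrite ?mul1n ?mul0n.
Qed.

Lemma sum_mul_indicator (R : pzSemiRingType) n (G : 'I_n -> R) i :
  \sum_k G k * (i == k)%:R = G i.
Proof.
rewrite (bigD1 i) //= eqxx mulr1 big1 ?addr0 // => k /negPf.
by rewrite eq_sym => ->; rewrite mulr0.
Qed.

Fact succ_ord_subproof n (y : 'I_n.-1) : (y.+1 < n)%N.
Proof. by rewrite -ltn_predRL. Qed.

Definition succ_ord n (y : 'I_n.-1) : 'I_n := Ordinal (succ_ord_subproof y).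

Section BagEnumeration.
Variables (r : nat) (a : 'I_r -> nat).
Hypothesis a_gt0 : forall k, (0 < a k)%N.

(* Vertex y of bag k is [bag_rep k] for y = 0 and [bag_nonrep (k, y - 1)] otherwise. *)
Definition nonrep_vertex : finType := {k : 'I_r & 'I_(a k).-1}.

Definition bag_rep (k : 'I_r) : bagV a := Tagged (fun k => 'I_(a k)) (Ordinal (a_gt0 k)).

Definition bag_nonrep (s : nonrep_vertex) : bagV a :=
  Tagged (fun k => 'I_(a k)) (succ_ord (tagged s)).

Definition bag_enum (i : 'I_(r + #|nonrep_vertex|)) : bagV a :=
  match split i with inl k => bag_rep k | inr s => bag_nonrep (enum_val s) end.

Lemma bag_rep_inj : injective bag_rep.
Proof. by move=> k l /(congr1 tag). Qed.

Lemma bag_nonrep_inj : injective bag_nonrep.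
Proof.
move=> [k y] [l z] /= e; have kl : k = l by move/(congr1 tag): e.
subst l; congr Tagged; apply/val_inj.
by move/(congr1 (fun u : bagV a => val (tagged u))): e => /= [].
Qed.

Lemma bag_rep_neq_nonrep k s : bag_rep k != bag_nonrep s.
Proof. by apply/eqP => /(congr1 (fun u : bagV a => val (tagged u))). Qed.

Lemma card_bagV : #|bagV a| = (r + #|nonrep_vertex|)%N.
Proof.
rewrite /bagV /nonrep_vertex !card_tagged !sumnE !big_map -enumT.
rewrite (eq_bigr (fun k => 1 + (a k).-1)%N) => [|k _]; last first.
  by rewrite card_ord add1n prednK.
rewrite big_split /= sum1_size size_enum_ord; congr (_ + _)%N.
by apply: eq_bigr => k _; rewrite card_ord.
Qed.

Lemma bag_enum_bij : bijective bag_enum.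
Proof.
apply: inj_card_bij; last by rewrite card_ord card_bagV.
move=> i j; rewrite /bag_enum => e; apply: (can_inj splitK); move: e.
case: (split i) => k; case: (split j) => l /=.
- by move/bag_rep_inj ->.
- by move=> e; move: (bag_rep_neq_nonrep k (enum_val l)); rewrite e eqxx.
- by move=> e; move: (bag_rep_neq_nonrep l (enum_val k)); rewrite e eqxx.
- by move/bag_nonrep_inj/enum_val_inj ->.
Qed.

Lemma bag_enum_lshift k : bag_enum (lshift _ k) = bag_rep k.
Proof. by rewrite /bag_enum -[lshift _ k]/(unsplit (inl _ k)) unsplitK. Qed.

Lemma bag_enum_rshift s : bag_enum (rshift _ s) = bag_nonrep (enum_val s).
Proof. by rewrite /bag_enum -[rshift _ s]/(unsplit (inr _ s)) unsplitK. Qed.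

Lemma big_nonrep_tag (T : Type) (idx : T) (op : Monoid.com_law idx) (G : 'I_r -> T) :
  \big[op/idx]_(s < #|nonrep_vertex|) G (tag (enum_val s)) =
  \big[op/idx]_k \big[op/idx]_(y < (a k).-1) G k.
Proof.
rewrite -(big_enum_val (fun u : nonrep_vertex => G (tag u))) /=.
by rewrite -(sig_big_dep (J := fun k => 'I_(a k).-1) xpredT (fun _ _ => true)
  (fun k _ => G k)).
Qed.

Lemma sum_nonrep_in_bag (R : pzSemiRingType) (G : 'I_r -> R) j :
  \sum_(s < #|nonrep_vertex|) (tag (enum_val s) == j)%:R * G (tag (enum_val s)) =
  (a j).-1%:R * G j.
Proof.
rewrite (big_nonrep_tag _ (fun k => (k == j)%:R * G k)) (bigD1 j) //= eqxx.
rewrite [X in _ + X]big1 => [|k /negPf jk]; last by rewrite big1 // => y _; rewrite jk mul0r.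
by rewrite addr0 mul1r sumr_const card_ord mulr_natl.
Qed.

End BagEnumeration.

Section BagReduction.
Variables (R : comNzRingType) (r : nat) (a : 'I_r -> nat).
Variables (p : 'I_r -> R) (c : 'I_r -> 'I_r -> R).
Hypothesis a_gt0 : forall k, (0 < a k)%N.

Definition bag_entry (u v : bagV a) : R :=
  if u == v then p (tag u) else c (tag u) (tag v).

Definition bag_quotient : 'M[R]_r :=
  \matrix_(j, k) if j == k then p k + (a k).-1%:R * c k k else (a j)%:R * c j k.

Local Notation m := #|nonrep_vertex a|.
Local Notation t s := (tag (enum_val s)).
Local Notation K := (\matrix_(i, j) bag_entry (bag_enum a_gt0 i) (bag_enum a_gt0 j)).

Definition nonrep_incidence : 'M[R]_(r, m) := \matrix_(j, s) (t s == j)%:R.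

Definition nonrep_eigenvalues : 'M[R]_m := diag_mx (\row_s (p (t s) - c (t s) (t s))).

Local Notation C := nonrep_incidence.
Local Notation D := nonrep_eigenvalues.

Lemma bag_entry_rep_rep j k :
  bag_entry (bag_rep a_gt0 j) (bag_rep a_gt0 k) = if j == k then p k else c j k.
Proof. by rewrite /bag_entry (inj_eq (@bag_rep_inj _ _ _)); case: eqP => // ->. Qed.

Lemma bag_entry_rep_nonrep j s : bag_entry (bag_rep a_gt0 j) (bag_nonrep s) = c j (tag s).
Proof. by rewrite /bag_entry (negbTE (bag_rep_neq_nonrep _ _ _)). Qed.

Lemma bag_entry_nonrep_rep s k : bag_entry (bag_nonrep s) (bag_rep a_gt0 k) = c (tag s) k.
Proof. by rewrite /bag_entry eq_sym (negbTE (bag_rep_neq_nonrep _ _ _)). Qed.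

Lemma bag_entry_nonrep_nonrep (s s' : 'I_m) :
  bag_entry (bag_nonrep (enum_val s)) (bag_nonrep (enum_val s')) =
  if s == s' then p (t s) else c (t s) (t s').
Proof.
rewrite /bag_entry (inj_eq (@bag_nonrep_inj _ _)) (inj_eq enum_val_inj).
by case: eqP => // ->.
Qed.

Lemma bag_quotient_block : ulsubmx K + C *m dlsubmx K = bag_quotient.
Proof.
apply/matrixP => j k; rewrite !mxE !bag_enum_lshift bag_entry_rep_rep.
under eq_bigr => s _ do rewrite !mxE bag_enum_lshift bag_enum_rshift bag_entry_nonrep_rep.
rewrite (sum_nonrep_in_bag _ (c^~ k)); case: eqP => [->|_] //.
by rewrite -[in RHS](prednK (a_gt0 j)) mulrS mulrDl mul1r.
Qed.

Lemma bag_cross_block : ursubmx K - ulsubmx K *m C = - (C *m D).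
Proof.
apply/matrixP => j s; rewrite mul_mx_diag !mxE bag_enum_lshift bag_enum_rshift.
under eq_bigr => k _ do rewrite !mxE !bag_enum_lshift bag_entry_rep_rep.
rewrite sum_mul_indicator bag_entry_rep_nonrep eq_sym.
by case: eqP => [->|_]; rewrite ?mul1r ?opprB ?subrr ?mul0r ?oppr0.
Qed.

Lemma bag_nonrep_block : drsubmx K - dlsubmx K *m C = D.
Proof.
apply/matrixP => s s'; rewrite !mxE !bag_enum_rshift bag_entry_nonrep_nonrep.
under eq_bigr => k _ do rewrite !mxE bag_enum_lshift bag_enum_rshift bag_entry_nonrep_rep.
rewrite sum_mul_indicator; case: eqP => [->|_]; first by rewrite mulr1n.
by rewrite subrr mulr0n.
Qed.

(* The column of P indexed by a non-representative v is e_v - e_rep. *)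
Lemma bag_block_similar (P := block_mx 1%:M (- C) 0 1%:M) :
  K *m P = P *m block_mx bag_quotient 0 (dlsubmx K) D.
Proof.
rewrite -[K in LHS]submxK /P !mulmx_block -bag_quotient_block.
rewrite !mulmx1 !mulmx0 !mul1mx !mul0mx !addr0 !add0r mulNmx addrK !mulmxN.
by rewrite mulNmx -bag_cross_block -bag_nonrep_block !(addrC (- _)).
Qed.

Theorem char_poly_bag_entry :
  char_poly (\matrix_(i, j) bag_entry (enum_val i) (enum_val j) : 'M_#|bagV a|) =
  char_poly bag_quotient * \prod_k ('X - (p k - c k k)%:P) ^+ (a k).-1.
Proof.
have PP : block_mx 1%:M C 0 1%:M *m block_mx 1%:M (- C) 0 1%:M = 1%:M :> 'M_(r + m).
  rewrite mulmx_block !mulmx1 !mul1mx !mulmx0 !mul0mx !addr0 !add0r.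
  by rewrite addNr -scalar_mx_block.
rewrite (char_poly_reindex bag_entry (enum_val_bij _) (bag_enum_bij a_gt0)).
rewrite -(char_poly_similar PP bag_block_similar) char_poly_block_lower.
rewrite [char_poly D]char_poly_trig ?diag_mx_is_trig //; congr (_ * _).
rewrite (eq_bigr (fun s => 'X - (p (t s) - c (t s) (t s))%:P)) => [|s _]; last first.
  by rewrite !mxE eqxx mulr1n.
rewrite (big_nonrep_tag a _ (fun k => 'X - (p k - c k k)%:P)).
by under eq_bigr do rewrite prodr_const card_ord.
Qed.

End BagReduction.

Lemma char_poly_bag_quotient (R : rcfType) r (a : 'I_r -> nat) (p : 'I_r -> R) c :
  (forall k, (0 < a k)%N) ->
  char_poly (bag_quotient a p c) =
  char_poly (\matrix_(j, k) if j == k then p k + (a k).-1%:R * c k k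
                            else c j k * Num.sqrt ((a j)%:R * (a k)%:R)).
Proof.
move=> a_gt0; have sqrt_neq0 k : Num.sqrt (a k)%:R != 0 :> R.
  by rewrite sqrtr_eq0 -ltNge ltr0n.
rewrite -[RHS](char_poly_diag_scale _ sqrt_neq0); congr char_poly.
apply/matrixP => j k; rewrite !mxE; case: eqP => [<-|_].
  by rewrite mulrAC mulfV ?mul1r.
rewrite sqrtrM ?ler0n // -[in LHS](@sqr_sqrtr _ (a j)%:R) ?ler0n //.
by field; rewrite sqrt_neq0.
Qed.

Definition intra_bag_weight (R : nmodType) r (e1 : 'I_r -> R) (k : 'I_r) : R :=
  if peven k then e1 k else 0.

Definition cross_bag_weight (R : nmodType) r (e : 'I_r -> 'I_r -> R) (j k : 'I_r) : R :=
  if (j < k)%N then (if peven k then e j k else 0) else (if peven j then e k j else 0).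

Definition uniform_offdiag (R : nmodType) r (e1 : 'I_r -> R) e (j k : 'I_r) : R :=
  if j == k then intra_bag_weight e1 j else cross_bag_weight e j k.

Lemma uniform_weighted_matrixE (R : comNzRingType) r (a : 'I_r -> nat)
    (p e1 : 'I_r -> R) (eps : 'I_r -> 'I_r -> R) :
  uniform_weighted_matrix a p e1 eps =
  \matrix_(i, j) bag_entry p (uniform_offdiag e1 eps) (enum_val i) (enum_val j)
    :> 'M_#|bagV a|.
Proof. by []. Qed.

Lemma sv_threshold_matrixE (R : nzRingType) r (p : 'I_r -> R) e :
  sv_threshold_matrix p e = \matrix_(j, k) if j == k then p j else cross_bag_weight e j k.
Proof. by []. Qed.

Lemma cross_bag_weightM (R : comPzRingType) r (e s : 'I_r -> 'I_r -> R) j k :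
  (forall i l, s i l = s l i) ->
  cross_bag_weight e j k * s j k = cross_bag_weight (fun i l => e i l * s i l) j k.
Proof.
move=> s_sym; rewrite /cross_bag_weight.
by do 2!case: ifP => _; rewrite ?mul0r // s_sym.
Qed.

Lemma sum_twin_eigenvalues (T : eqType) r (a : 'I_r -> nat) (P : pred 'I_r) (x y z : T) :
  (\sum_k ((if P k then y else z) == x) * (a k).-1 =
   (x == y) * \sum_(k | P k) (a k - 1) + (x == z) * \sum_(k | ~~ P k) (a k - 1))%N.
Proof.
rewrite !big_distrr (bigID P) /=; congr (_ + _)%N; apply: eq_bigr => k Pk;
  by rewrite ?Pk ?(negbTE Pk) subn1 eq_sym.
Qed.

Section Mod4Weights.
Variables (R : numFieldType) (lam : R).

Definition mod4_vertex_weight (n q : nat) : R :=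
  match q with
  | 1%N => 0
  | 2%N => lam * (n%:R - 1) / n%:R
  | 3%N => lam
  | _ => lam / n%:R
  end.

Definition mod4_bag_weight (n q : nat) : R :=
  match q with
  | 1%N => 0
  | 2%N => - (lam / n%:R)
  | 3%N => 0
  | _ => lam / n%:R
  end.

Lemma mod4_bag_weight_odd n q : (q < 4)%N -> odd q -> mod4_bag_weight n q = 0.
Proof. by case: q => [|[|[|[|]]]]. Qed.

Lemma mod4_quotient_diag n q : (0 < n)%N -> (q < 4)%N ->
  mod4_vertex_weight n q + n.-1%:R * mod4_bag_weight n q =
  if (q == 1%N) || (q == 2%N) then 0 else lam.
Proof.
move=> n_gt0 q_lt4; have n_neq0 : n%:R != 0 :> R by rewrite pnatr_eq0 -lt0n.
have -> : n.-1%:R = n%:R - 1 :> R by rewrite -{2}(prednK n_gt0) -natr1 addrK.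
by case: q q_lt4 => [|[|[|[|q]]]] //= _; field.
Qed.

Lemma mod4_twin_eigenvalue n q : (0 < n)%N -> (q < 4)%N ->
  mod4_vertex_weight n q - mod4_bag_weight n q =
  if (q == 0%N) || (q == 1%N) then 0 else lam.
Proof.
move=> n_gt0 q_lt4; have n_neq0 : n%:R != 0 :> R by rewrite pnatr_eq0 -lt0n.
by case: q q_lt4 => [|[|[|[|q]]]] //= _; field.
Qed.

End Mod4Weights.

Lemma m4_lt4 r (k : 'I_r) : (m4 k < 4)%N.
Proof. by rewrite /m4 ltn_pmod. Qed.

Lemma peven_m4 r (k : 'I_r) : peven k = ~~ odd (m4 k).
Proof. by rewrite /peven /m4 odd_mod. Qed.

Lemma intra_bag_weight_mod4 (R : numFieldType) (lam : R) r (a : 'I_r -> nat) k :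
  intra_bag_weight (fun k => mod4_bag_weight lam (a k) (m4 k)) k =
  mod4_bag_weight lam (a k) (m4 k).
Proof.
rewrite /intra_bag_weight peven_m4; case: ifPn => // /negPn m4_odd.
by rewrite mod4_bag_weight_odd ?m4_lt4.
Qed.

Theorem mainTheorem3 (R : rcfType) (lam : R) (r : nat) (a : 'I_r -> nat)
  (eps : 'I_r -> 'I_r -> R) :
  lam != 0 -> (1 <= r)%N -> (forall k, (1 <= a k)%N) ->
  (forall i j : 'I_r, (i < j)%N -> peven j -> eps i j != 0) ->
  let p := fun k : 'I_r =>
    match m4 k with
    | 1%N => 0
    | 2%N => lam * ((a k)%:R - 1) / (a k)%:R
    | 3%N => lam
    | _ => lam / (a k)%:R
    end in
  let e1 := fun k : 'I_r =>
    match m4 k with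
    | 1%N => 0
    | 2%N => - (lam / (a k)%:R)
    | 3%N => 0
    | _ => lam / (a k)%:R
    end in
  let M := uniform_weighted_matrix a p e1 eps in
  let p1 := fun k : 'I_r =>
    if (m4 k == 1%N) || (m4 k == 2%N) then 0 else lam in
  let e1' := fun i j : 'I_r => eps i j * Num.sqrt ((a i)%:R * (a j)%:R) in
  let T1 := sv_threshold_matrix p1 e1' in
  let A := (\sum_(k < r | (m4 k == 0%N) || (m4 k == 1%N)) (a k - 1))%N in
  let B := (\sum_(k < r | (m4 k == 2%N) || (m4 k == 3%N)) (a k - 1))%N in
  forall x : R,
    spec_mult M x = (spec_mult T1 x + (x == 0%R) * A + (x == lam) * B)%N.
Proof.
move=> _ _ a_gt0 _ p e1 M p1 e1' T1 A B x.
pose c := uniform_offdiag e1 eps.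
have e1E k : intra_bag_weight e1 k = e1 k := intra_bag_weight_mod4 lam a k.
have twin_eigenvalueE k : p k - c k k = if (m4 k == 0) || (m4 k == 1) then 0 else lam.
  by rewrite /c /uniform_offdiag eqxx e1E mod4_twin_eigenvalue ?m4_lt4.
have twins_monic : \prod_k ('X - (p k - c k k)%:P) ^+ (a k).-1 \is monic.
  by apply: monic_prod => k _; apply/monic_exp/monicXsubC.
rewrite /spec_mult /M uniform_weighted_matrixE char_poly_bag_entry //.
rewrite mupM ?monic_neq0 ?char_poly_monic // mup_prod_XsubC_exp -addnA.
congr (mup x _ + _)%N.
  rewrite char_poly_bag_quotient //; congr char_poly.
  apply/matrixP => j k; rewrite /T1 sv_threshold_matrixE !mxE /c /uniform_offdiag.
  case: eqP => [<-|_].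
    by rewrite eqxx e1E; exact: (mod4_quotient_diag lam (a_gt0 j) (m4_lt4 j)).
  rewrite (cross_bag_weightM eps (s := fun i l => Num.sqrt ((a i)%:R * (a l)%:R))) //.
  by move=> i l; rewrite mulrC.
under eq_bigr do rewrite twin_eigenvalueE.
rewrite sum_twin_eigenvalues; congr (_ * _ + _ * _)%N; apply: eq_bigl => k.
by have := m4_lt4 k; case: (m4 k) => [|[|[|[|]]]].
Qed.
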